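(* Consider the discrete-time system $x_{k+1}=f(x_k,u_k,w_k)$, $y_k=h(x_k,v_k)$ ($x\in\mathbb{R}^n$, $u\in\mathbb{R}^m$, $w\in\mathbb{R}^q$, $v\in\mathbb{R}^r$, $y\in\mathbb{R}^p$, $f,h$ continuously differentiable), and suppose there is a diffeomorphism $\phi$ such that $\bar{x}=\phi(x)$ transforms it into $$\bar{x}_{k+1}=f_1(\bar{x}_k,u_k)+Bf_2(w_k,\bar{x}_k,u_k),\qquad y_k=C\bar{x}_k+g(v_k),$$ with $C\in\mathbb{R}^{p\times n}$, $B\in\mathbb{R}^{n\times s}$ and $f_1,f_2,g$ continuously differentiable. If $\operatorname{rank}(CB)=\operatorname{rank}(B)$, then there exist a diffeomorphism $T=(T_\flat,T_\sharp):\mathbb{R}^n\to\mathbb{R}^{n_\flat+n_\sharp}$ and a continuously differentiable $\psi:\mathbb{R}^p\times\mathbb{R}^{n_\sharp}\times\mathbb{R}^r\to\mathbb{R}^{n_\flat}$ such that, writing $z=T(x)=(z^\flat,z^\sharp)$, $f_\sharp(z^\sharp,z^\flat,u,w):=T_\sharp(f(T^{-1}(z),u,w))$ and $h_T(z^\sharp,z^\flat,v):=h(T^{-1}(z),v)$: (a) $z^\flat=\psi(y,z^\sharp,v)$ whenever $y=h_T(z^\sharp,z^\flat,v)$, and (b) $\frac{\partial f_\sharp^i}{\partial w}(z^\sharp,z^\flat,u,w)=0$ for all $i\in\{1,\dots,n_\sharp\}$ and all arguments, where $f^i_\sharp$ is the $i$-th component of $f_\sharp$. *)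

From HB Require Import structures.
From mathcomp Require Import all_boot all_order all_algebra.
From mathcomp Require Import all_classical all_reals all_analysis.
Set Implicit Arguments. Unset Strict Implicit. Unset Printing Implicit Defensive.
Import Order.TTheory GRing.Theory Num.Theory.
Import numFieldNormedType.Exports.
Local Open Scope ring_scope.

(* Continuously differentiable (C^1) map between finite-dimensional normed
   spaces: differentiable everywhere, and the differential x |-> 'd f x is
   continuous (tested on every fixed direction v, which in finite dimension
   is the same as continuity in operator norm). *)
Definition C1 {R : realType} {U V : normedModType R} (f : U -> V) : Prop :=
  (forall x, differentiable f x) /\ (forall v : U, continuous (fun x => 'd f x v)).

Definition diffeo {R : realType} {U V : normedModType R}
  (f : U -> V) (g : V -> U) : Prop :=
  cancel f g /\ cancel g f /\ C1 f /\ C1 g.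

From HB Require Import structures.
From mathcomp Require Import all_boot all_order all_algebra.
From mathcomp Require Import all_classical all_reals all_analysis.
Import Order.TTheory GRing.Theory Num.Theory.
Import numFieldNormedType.Exports.
Local Open Scope ring_scope.

(* Let K be a basis of the left kernel of B and Kc a complement, so that
   M = [Kc; K] is invertible, and put T = M o phi.  Since K B = 0, the sharp
   part K phi(x) evolves as K f1(phi x, u), in which w does not occur.  The
   rank condition rank (C B) = rank B says that the rows of C and the left
   kernel of B together span the whole row space, i.e. L1 C + L2 K = 1 for
   some L1, L2; hence phi x = L1 (y - g v) + L2 z_sharp, and z_flat = Kc phi x
   is a C^1 function of y, z_sharp and v. *)

Set Implicit Arguments. Unset Strict Implicit. Unset Printing Implicit Defensive.

Section KernelCoordinates.
Variable F : fieldType.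

Lemma row_full_free_inv m n (A : 'M[F]_(m, n)) :
  row_full A -> row_free A ->
  exists2 A' : 'M[F]_(n, m), A' *m A = 1%:M & A *m A' = 1%:M.
Proof.
move=> /row_fullP[A' A'A] /row_freeP[A'' AA'']; exists A' => //.
suff -> : A' = A'' by [].
by rewrite -[A']mulmx1 -AA'' mulmxA A'A mul1mx.
Qed.

Lemma row_full_compl_base n (A : 'M[F]_n) :
  row_full (col_mx (row_base A^C%MS) (row_base A)).
Proof.
rewrite -sub1mx -addsmxE (adds_eqmx (eq_row_base _) (eq_row_base _)).
by rewrite addsmxC sub1mx addsmx_compl_full.
Qed.

Lemma row_free_compl_base n (A : 'M[F]_n) :
  row_free (col_mx (row_base A^C%MS) (row_base A)).
Proof.
rewrite /row_free (eqP (row_full_compl_base A)) mxrank_compl subnK //.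
exact: rank_leq_col.
Qed.

Lemma mulmx_ker_base n s (B : 'M[F]_(n, s)) : row_base (kermx B) *m B = 0.
Proof. by apply/sub_kermxP; rewrite eq_row_base. Qed.

Lemma row_full_col_mx_ker p n s k (C : 'M[F]_(p, n)) (B : 'M[F]_(n, s))
    (K : 'M[F]_(k, n)) :
  (K :=: kermx B)%MS -> \rank (C *m B) = \rank B -> row_full (col_mx C K).
Proof.
move=> eqK rCB; apply/eqP.
have KB : K *m B = 0 by apply/sub_kermxP; rewrite eqK.
have capK : (col_mx C K :&: kermx B :=: kermx B)%MS.
  by apply/capmx_idPr; rewrite -addsmxE -eqK addsmxSr.
(* rank-nullity for x |-> x B on the row space of [C; K], which contains ker B *)
have := mxrank_mul_ker (col_mx C K) B.
rewrite mul_col_mx KB rank_col_mx0 rCB capK => <-.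
by rewrite mxrank_ker subnKC // rank_leq_row.
Qed.

Lemma mulmx_col_mx_linv p k n l (C : 'M[F]_(p, n)) (K : 'M[F]_(k, n))
    (L : 'M[F]_(n, p + k)) (x : 'M[F]_(n, l)) :
  L *m col_mx C K = 1%:M -> lsubmx L *m (C *m x) + rsubmx L *m (K *m x) = x.
Proof. by move=> LCK; rewrite !mulmxA -mulmxDl -mul_row_col hsubmxK LCK mul1mx. Qed.

End KernelCoordinates.

Section C1Calculus.
Variables (R : realType) (U V W : normedModType R).

Lemma C1_linear (L : {linear U -> V}) : continuous L -> C1 (L : U -> V).
Proof.
move=> Lc; split => [x|v]; first exact: linear_differentiable.
under eq_fun do rewrite diff_lin //.
exact: cst_continuous.
Qed.

Lemma C1_comp_linearl (f : U -> V) (L : {linear V -> W}) :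
  continuous L -> C1 f -> C1 ((L : V -> W) \o f).
Proof.
move=> Lc [df cf]; split => [x|v].
  by apply: differentiable_comp => //; exact: linear_differentiable.
have -> : (fun x => 'd ((L : V -> W) \o f) x v) = L \o (fun x => 'd f x v).
  apply/funext => x; rewrite diff_comp ?diff_lin //.
  exact: linear_differentiable.
by move=> x; apply: continuous_comp; [exact: cf | exact: Lc].
Qed.

Lemma C1_comp_linearr (L : {linear U -> V}) (f : V -> W) :
  continuous L -> C1 f -> C1 (f \o (L : U -> V)).
Proof.
move=> Lc [df cf]; split => [x|v].
  by apply: differentiable_comp => //; exact: linear_differentiable.
have -> : (fun x => 'd (f \o (L : U -> V)) x v) = (fun y => 'd f y (L v)) \o L.
  apply/funext => x; rewrite diff_comp ?diff_lin //.
  exact: linear_differentiable.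
by move=> x; apply: continuous_comp; [exact: Lc | exact: cf].
Qed.

Lemma C1D (f g : U -> V) : C1 f -> C1 g -> C1 (f + g).
Proof.
move=> [df cf] [dg cg]; split => [x|v]; first exact: differentiableD.
have -> : (fun x => 'd (f + g) x v) = (fun x => 'd f x v) + (fun x => 'd g x v).
  by apply/funext => x; rewrite diffD.
move=> x; apply: continuousD; [exact: cf | exact: cg].
Qed.

End C1Calculus.

Section Projections.
Variables (R : realType) (U V W : normedModType R).

Lemma continuous_fst : continuous (@fst U V).
Proof. by move=> [x y]; exact: cvg_fst. Qed.

Lemma continuous_snd : continuous (@snd U V).
Proof. by move=> [x y]; exact: cvg_snd. Qed.

Lemma C1_comp_fst (f : U -> W) : C1 f -> C1 (f \o @fst U V).
Proof. exact: (C1_comp_linearr (L := fst) continuous_fst). Qed.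

Lemma C1_comp_snd (f : V -> W) : C1 f -> C1 (f \o @snd U V).
Proof. exact: (C1_comp_linearr (L := snd) continuous_snd). Qed.

End Projections.

Lemma continuous_mx (T : topologicalType) (K : puniformType) m n
    (f : T -> 'M[K]_(m, n)) :
  (forall i j, continuous (fun x => f x i j)) -> continuous f.
Proof.
move=> fc x; apply/cvg_mx_entourageP => A entA.
have fA i j : \forall y \near x, A (f x i j, f y i j).
  exact: (cvg_app_entourageP _ _ _).1 (fc i j x) A entA.
near=> y => i j; rewrite inE; move: i j; near: y.
apply: filter_forall => i; apply: filter_forall => j; exact: fA.
Unshelve. all: by end_near. Qed.

Section MatrixMaps.
Variable R : realType.

Lemma continuous_mulmx m n k (A : 'M[R]_(m, n)) :
  continuous (mulmx A : 'M[R]_(n, k) -> 'M[R]_(m, k)).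
Proof.
apply: continuous_mx => i j; under eq_fun do rewrite mxE.
apply: continuous_big => [|l _]; first exact: add_continuous.
by move=> x; apply: continuousM; [exact: cst_continuous | exact: coord_continuous].
Qed.

Lemma diffeo_mulmx (U : normedModType R) n k l (phi : U -> 'M[R]_(n, l))
    (phiinv : 'M[R]_(n, l) -> U) (M : 'M[R]_(k, n)) (N : 'M[R]_(n, k)) :
  diffeo phi phiinv -> N *m M = 1%:M -> M *m N = 1%:M ->
  diffeo (fun x => M *m phi x) (fun z => phiinv (N *m z)).
Proof.
move=> [phiK [phiinvK [Cphi Cphiinv]]] NM MN; split; [|split; [|split]].
- by move=> x; rewrite mulmxA NM mul1mx phiK.
- by move=> z; rewrite phiinvK mulmxA MN mul1mx.
- exact: C1_comp_linearl (continuous_mulmx (A := M)) Cphi.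
- exact: C1_comp_linearr (continuous_mulmx (A := N)) Cphiinv.
Qed.

Lemma C1_mulmxB_add p k r b (A : 'M[R]_(b, p)) (D : 'M[R]_(b, k))
    (g : 'cV[R]_r -> 'cV[R]_p) :
  C1 g -> C1 (fun t : 'cV[R]_p * 'cV[R]_k * 'cV[R]_r =>
                A *m (t.1.1 - g t.2) + D *m t.1.2).
Proof.
move=> Cg.
have -> : (fun t : 'cV[R]_p * 'cV[R]_k * 'cV[R]_r =>
             A *m (t.1.1 - g t.2) + D *m t.1.2)
    = (mulmx A \o fst \o fst) + (mulmx D \o snd \o fst) + (mulmx (- A) \o g \o snd).
  by apply/funext => t; rewrite !fctE /= mulmxBr mulNmx addrAC.
apply: C1D; first apply: C1D.
- apply/C1_comp_fst/C1_comp_fst.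
  exact: (C1_linear (L := mulmx A)) (continuous_mulmx (A := A)).
- apply/C1_comp_fst/C1_comp_snd.
  exact: (C1_linear (L := mulmx D)) (continuous_mulmx (A := D)).
- apply/C1_comp_snd.
  exact: C1_comp_linearl (continuous_mulmx (A := - A)) Cg.
Qed.

End MatrixMaps.

Theorem proposition1 (R : realType) (n m q r p s : nat)
  (f : 'cV[R]_n -> 'cV[R]_m -> 'cV[R]_q -> 'cV[R]_n)
  (h : 'cV[R]_n -> 'cV[R]_r -> 'cV[R]_p)
  (phi phiinv : 'cV[R]_n -> 'cV[R]_n)
  (f1 : 'cV[R]_n -> 'cV[R]_m -> 'cV[R]_n)
  (f2 : 'cV[R]_q -> 'cV[R]_n -> 'cV[R]_m -> 'cV[R]_s)
  (g : 'cV[R]_r -> 'cV[R]_p)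
  (C : 'M[R]_(p, n)) (B : 'M[R]_(n, s)) :
  C1 (fun xuw : 'cV[R]_n * 'cV[R]_m * 'cV[R]_q => f xuw.1.1 xuw.1.2 xuw.2) ->
  C1 (fun xv : 'cV[R]_n * 'cV[R]_r => h xv.1 xv.2) ->
  diffeo phi phiinv ->
  C1 (fun xu : 'cV[R]_n * 'cV[R]_m => f1 xu.1 xu.2) ->
  C1 (fun wxu : 'cV[R]_q * 'cV[R]_n * 'cV[R]_m => f2 wxu.1.1 wxu.1.2 wxu.2) ->
  C1 g ->
  (* transformed dynamics: xbar_{k+1} = f1(xbar_k,u_k) + B f2(w_k,xbar_k,u_k) *)
  (forall (x : 'cV[R]_n) (u : 'cV[R]_m) (w : 'cV[R]_q),
      phi (f x u w) = f1 (phi x) u + B *m f2 w (phi x) u) ->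
  (* transformed output: y_k = C xbar_k + g(v_k) *)
  (forall (x : 'cV[R]_n) (v : 'cV[R]_r), h x v = C *m phi x + g v) ->
  \rank (C *m B) = \rank B ->
  exists (nb ns : nat) (T : 'cV[R]_n -> 'cV[R]_(nb + ns))
         (Tinv : 'cV[R]_(nb + ns) -> 'cV[R]_n)
         (psi : 'cV[R]_p -> 'cV[R]_ns -> 'cV[R]_r -> 'cV[R]_nb),
    diffeo T Tinv /\
    C1 (fun yzv : 'cV[R]_p * 'cV[R]_ns * 'cV[R]_r => psi yzv.1.1 yzv.1.2 yzv.2) /\
    (* (a): z_flat = psi(y, z_sharp, v) whenever y = h_T(z_sharp, z_flat, v) *)
    (forall (zs : 'cV[R]_ns) (zb : 'cV[R]_nb) (v : 'cV[R]_r) (y : 'cV[R]_p),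
        y = h (Tinv (col_mx zb zs)) v -> zb = psi y zs v) /\
    (* (b): d f_sharp^i / d w_j = 0 everywhere, f_sharp = T_sharp(f(T^{-1} z, u, w)) *)
    (forall (zs : 'cV[R]_ns) (zb : 'cV[R]_nb) (u : 'cV[R]_m) (w : 'cV[R]_q)
            (i : 'I_ns) (j : 'I_q),
        'D_(delta_mx j 0 : 'cV[R]_q)
          (fun w' : 'cV[R]_q => dsubmx (T (f (Tinv (col_mx zb zs)) u w')) i 0) w
        = 0).
Proof.
move=> _ _ phiD _ _ Cg hf hh rCB.
set K := row_base (kermx B); set Kc := row_base (kermx B)^C%MS.
have [N NM MN] := row_full_free_inv (row_full_compl_base (kermx B))
                                    (row_free_compl_base (kermx B)).
have /row_fullP[L LCK] := row_full_col_mx_ker (C := C) (eq_row_base (kermx B)) rCB.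
exists _, _, (fun x => col_mx Kc K *m phi x), (fun z => phiinv (N *m z)),
  (fun y zs v => Kc *m lsubmx L *m (y - g v) + Kc *m rsubmx L *m zs).
split; first exact: diffeo_mulmx.
split; first exact: C1_mulmxB_add.
split=> [zs zb v _ -> | zs zb u w i j].
  have [_ [phiinvK _]] := phiD.
  set x := N *m col_mx zb zs.
  have /eq_col_mx[zbE zsE] : col_mx (Kc *m x) (K *m x) = col_mx zb zs.
    by rewrite -mul_col_mx mulmxA MN mul1mx.
  rewrite hh phiinvK addrK -{1}zbE -zsE -!(mulmxA Kc) -mulmxDr.
  by rewrite mulmx_col_mx_linv.
under eq_fun do
  rewrite hf mul_col_mx col_mxKd mulmxDr mulmxA mulmx_ker_base mul0mx addr0.
exact: derive_cst.
Qed.
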